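(* Let $S\subseteq\mathcal{D}$. If $S$ is $\mathcal{I}$-minimized (resp. $\mathcal{I}$-maximized), then every probability distribution $\lambda$ on $\mathcal{D}$ supported on $S$ satisfies $C_{11}(\lambda)=\underline{C}_{11}(W_\lambda)$ (resp. $C_{11}(\lambda)=\overline{C}_{11}(W_\lambda)$), where $W_\lambda=\sum_D\lambda_DD$. As a consequence, every nonempty subset of $S$ is also $\mathcal{I}$-minimized (resp. $\mathcal{I}$-maximized).
   Context: Channels from $\{1,\dots,m\}$ to $\{1,\dots,n\}$ are $m\times n$ row-stochastic matrices; $\mathcal{D}$ is the set of deterministic (0-1) channels, $\mathrm{rank}(D)$ the matrix rank. For a channel $W$, $\Lambda(W)=\{\lambda\text{ probability distribution on }\mathcal{D}: W=\sum_D\lambda_DD\}$, $C_{11}(\lambda)=\sum_D\lambda_D\log_2\mathrm{rank}(D)$, $\underline{C}_{11}(W)=\inf_{\lambda\in\Lambda(W)}C_{11}(\lambda)$, $\overline{C}_{11}(W)=\sup_{\lambda\in\Lambda(W)}C_{11}(\lambda)$. A subset $S\subseteq\mathcal{D}$ is $\mathcal{I}$-minimized (resp. $\mathcal{I}$-maximized) if there is a probability distribution $\lambda$ on $\mathcal{D}$ with $\mathrm{supp}(\lambda)=S$ and $C_{11}(\lambda)=\underline{C}_{11}(W)$ (resp. $=\overline{C}_{11}(W)$), where $W=\sum_D\lambda_DD$. ''Supported on $S$'' means $\lambda_D=0$ for $D\notin S$. *)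

From mathcomp Require Import all_boot all_order all_algebra.
From mathcomp Require Import classical_sets reals exp.
Set Implicit Arguments. Unset Strict Implicit. Unset Printing Implicit Defensive.
Import Order.TTheory GRing.Theory Num.Theory.
Local Open Scope ring_scope.

Section Channels.
Variables (R : realType) (m n : nat).

(* Deterministic channels {1..m} -> {1..n} are identified with functions
   f : 'I_m -> 'I_n ; the associated 0-1 row-stochastic matrix is detmx f. *)
Definition detch := {ffun 'I_m -> 'I_n}.

Definition detmx (f : detch) : 'M[R]_(m, n) :=
  \matrix_(i < m, j < n) (f i == j)%:R.

Definition log2 (x : R) : R := ln x / ln 2.

Definition is_dist (lam : {ffun detch -> R}) : Prop :=
  (forall D, 0 <= lam D) /\ \sum_(D : detch) lam D = 1.

Definition supp (lam : {ffun detch -> R}) : {set detch} :=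
  [set D | lam D != 0].

Definition mix (lam : {ffun detch -> R}) : 'M[R]_(m, n) :=
  \sum_(D : detch) lam D *: detmx D.

Definition C11 (lam : {ffun detch -> R}) : R :=
  \sum_(D : detch) lam D * log2 (\rank (detmx D))%:R.

Definition Lambda (W : 'M[R]_(m, n)) : set {ffun detch -> R} :=
  [set lam | is_dist lam /\ mix lam = W].

Definition C11_low (W : 'M[R]_(m, n)) : R :=
  inf [set C11 lam | lam in Lambda W].

Definition C11_up (W : 'M[R]_(m, n)) : R :=
  sup [set C11 lam | lam in Lambda W].

Definition I_minimized (S : {set detch}) : Prop :=
  exists lam, is_dist lam /\ supp lam = S /\ C11 lam = C11_low (mix lam).

Definition I_maximized (S : {set detch}) : Prop :=
  exists lam, is_dist lam /\ supp lam = S /\ C11 lam = C11_up (mix lam).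

End Channels.

From mathcomp Require Import all_boot all_order all_algebra.
From mathcomp Require Import classical_sets reals exp.
From mathcomp Require Import ring lra.
Import Order.TTheory GRing.Theory Num.Theory.
Local Open Scope ring_scope.
Set Implicit Arguments. Unset Strict Implicit.

(* Both [mix] and [C11] are linear in the distribution.  Let [ls] be optimal
   in its fibre with support [S], let [lam] be supported on [S] and let [mu]
   have the same mixture as [lam].  Since every weight of [ls] on [S] is
   positive, [ls + eps (mu - lam)] is still a distribution for small
   [eps > 0]; it lies in the fibre of [ls], so comparing it with [ls] gives
   [C11 lam <= C11 mu] (resp. [>=]), i.e. [lam] is optimal in its own fibre.
   A nonempty [S' \subset S] is then witnessed by the uniform distribution
   on [S']. *)

Section Perturbation.
Variables (R : realType) (m n : nat).
Local Notation dist := {ffun detch m n -> R}.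

Definition supported_on (S : {set detch m n}) (lam : dist) : Prop :=
  forall D, D \notin S -> lam D = 0.

Lemma supported_on_supp (lam : dist) : supported_on (supp lam) lam.
Proof. by move=> D; rewrite inE negbK => /eqP. Qed.

Lemma supported_on_subset (S S' : {set detch m n}) (lam : dist) :
  S' \subset S -> supported_on S' lam -> supported_on S lam.
Proof.
move=> sub_S'S lamS' D DnS; apply: lamS'.
by apply: contra DnS; exact: (fintype.subsetP sub_S'S).
Qed.

Lemma dist_le1 (lam : dist) D : is_dist lam -> lam D <= 1.
Proof.
move=> [lam_ge0 <-]; rewrite (bigD1 D) //= lerDl.
by apply: sumr_ge0 => E _; exact: lam_ge0.
Qed.

Definition shift (ls mu lam : dist) (eps : R) : dist :=
  [ffun D => ls D + eps * (mu D - lam D)].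

Lemma mix_shift ls mu lam eps :
  mix (shift ls mu lam eps) = mix ls + eps *: (mix mu - mix lam).
Proof.
rewrite /mix -sumrB scaler_sumr -big_split; apply: eq_bigr => D _.
by rewrite ffunE scalerDl -scalerA scalerBl scalerBr.
Qed.

Lemma C11_shift ls mu lam eps :
  C11 (shift ls mu lam eps) = C11 ls + eps * (C11 mu - C11 lam).
Proof.
rewrite /C11 -sumrB mulr_sumr -big_split; apply: eq_bigr => D _.
by rewrite ffunE mulrDl -mulrA mulrBl.
Qed.

Lemma is_dist_shift ls mu lam eps :
  is_dist ls -> is_dist mu -> is_dist lam -> 0 <= eps ->
  (forall D, eps * lam D <= ls D) -> is_dist (shift ls mu lam eps).
Proof.
move=> [_ ls1] [mu_ge0 mu1] [_ lam1] eps_ge0 room; split.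
  move=> D; rewrite ffunE mulrBr.
  have := room D; have := mulr_ge0 eps_ge0 (mu_ge0 D); lra.
under eq_bigr do rewrite ffunE.
by rewrite big_split /= -mulr_sumr sumrB ls1 mu1 lam1 subrr mulr0 addr0.
Qed.

(* [eps] is the smallest positive weight of [ls] ([1] if there is none);
   it works because [lam D <= 1] and [lam] vanishes outside [supp ls]. *)
Lemma exists_shift_room (ls lam : dist) :
  is_dist ls -> is_dist lam -> supported_on (supp ls) lam ->
  exists2 eps, 0 < eps & forall D, eps * lam D <= ls D.
Proof.
move=> dls dlam lam_supp; have [ls_ge0 _] := dls.
set eps := \big[Order.min/1]_(D in supp ls) ls D.
have eps_gt0 : 0 < eps.
  apply: (big_ind (fun x => 0 < x)) => // [x y x_gt0 y_gt0|D].
    by rewrite lt_min x_gt0 y_gt0.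
  by rewrite inE => lsD_neq0; rewrite lt0r lsD_neq0 ls_ge0.
exists eps => // D; case: (boolP (D \in supp ls)) => [Dls | Dnls].
  apply: le_trans (bigmin_le_cond _ _ Dls).
  by apply: ler_piMr; [exact: ltW | exact: dist_le1].
by rewrite lam_supp // mulr0.
Qed.

Section FibreOptimum.
Variable phi : dist -> R.
Hypothesis phi_shift : forall ls mu lam eps,
  phi (shift ls mu lam eps) = phi ls + eps * (phi mu - phi lam).

Lemma fibre_min_on_support (ls lam mu : dist) :
  is_dist ls ->
  (forall nu, is_dist nu -> mix nu = mix ls -> phi ls <= phi nu) ->
  is_dist lam -> supported_on (supp ls) lam ->
  is_dist mu -> mix mu = mix lam -> phi lam <= phi mu.
Proof.
move=> dls ls_min dlam lam_supp dmu mix_mu.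
have [eps eps_gt0 room] := exists_shift_room dls dlam lam_supp.
have dnu := is_dist_shift dls dmu dlam (ltW eps_gt0) room.
have := ls_min _ dnu.
rewrite mix_shift mix_mu subrr scaler0 addr0 phi_shift => /(_ erefl).
by rewrite lerDl pmulr_rge0 // subr_ge0.
Qed.

End FibreOptimum.

Lemma oppC11_shift ls mu lam eps :
  - C11 (shift ls mu lam eps) = - C11 ls + eps * (- C11 mu - - C11 lam).
Proof. by rewrite C11_shift; ring. Qed.

End Perturbation.

Section FibreExtrema.
Variables (R : realType) (m n : nat).
Local Notation dist := {ffun detch m n -> R}.

Lemma normr_C11_le (lam : dist) : is_dist lam ->
  `|C11 lam| <= \sum_(D : detch m n) `|log2 (\rank (detmx R D))%:R|.
Proof.
move=> dlam; apply: le_trans (ler_norm_sum _ _ _) _; apply: ler_sum => D _.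
rewrite normrM ger0_norm; last by case: dlam.
by apply: ler_piMl => //; exact: dist_le1.
Qed.

Lemma C11_low_le (lam : dist) : is_dist lam -> C11_low (mix lam) <= C11 lam.
Proof.
move=> dlam; apply: ge_inf; last by exists lam.
exists (- \sum_(D : detch m n) `|log2 (\rank (detmx R D))%:R|).
move=> _ [mu [dmu _] <-].
by move: (normr_C11_le dmu); rewrite ler_norml => /andP[].
Qed.

Lemma C11_up_ge (lam : dist) : is_dist lam -> C11 lam <= C11_up (mix lam).
Proof.
move=> dlam; apply: ub_le_sup; last by exists lam.
exists (\sum_(D : detch m n) `|log2 (\rank (detmx R D))%:R|).
move=> _ [mu [dmu _] <-].
by move: (normr_C11_le dmu); rewrite ler_norml => /andP[].
Qed.

Lemma C11_lowE (lam : dist) : is_dist lam ->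
  (forall mu, is_dist mu -> mix mu = mix lam -> C11 lam <= C11 mu) ->
  C11_low (mix lam) = C11 lam.
Proof.
move=> dlam lam_min.
have lam_lb : lbound [set C11 mu | mu in Lambda (mix lam)] (C11 lam).
  by move=> _ [mu [dmu mix_mu] <-]; exact: lam_min.
apply/le_anti; rewrite lb_le_inf ?andbT //; last by exists (C11 lam), lam.
by apply: ge_inf; [exists (C11 lam) | exists lam].
Qed.

Lemma C11_upE (lam : dist) : is_dist lam ->
  (forall mu, is_dist mu -> mix mu = mix lam -> C11 mu <= C11 lam) ->
  C11_up (mix lam) = C11 lam.
Proof.
move=> dlam lam_max.
have lam_ub : ubound [set C11 mu | mu in Lambda (mix lam)] (C11 lam).
  by move=> _ [mu [dmu mix_mu] <-]; exact: lam_max.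
apply/le_anti; rewrite ge_sup //; last by exists (C11 lam), lam.
by apply: ub_le_sup; [exists (C11 lam) | exists lam].
Qed.

End FibreExtrema.

Section Optimized.
Variables (R : realType) (m n : nat).
Local Notation dist := {ffun detch m n -> R}.

Lemma I_minimized_supported (S : {set detch m n}) (lam : dist) :
  I_minimized R S -> is_dist lam -> supported_on S lam ->
  C11 lam = C11_low (mix lam).
Proof.
move=> [ls [dls [<- ls_min]]] dlam lam_supp.
apply/esym/C11_lowE => // mu dmu mix_mu.
apply: (fibre_min_on_support (@C11_shift R m n) dls _ dlam lam_supp dmu mix_mu).
by move=> nu dnu mix_nu; rewrite ls_min -mix_nu; exact: C11_low_le.
Qed.

Lemma I_maximized_supported (S : {set detch m n}) (lam : dist) :
  I_maximized R S -> is_dist lam -> supported_on S lam ->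
  C11 lam = C11_up (mix lam).
Proof.
move=> [ls [dls [<- ls_max]]] dlam lam_supp.
apply/esym/C11_upE => // mu dmu mix_mu; rewrite -lerN2.
apply: (fibre_min_on_support (@oppC11_shift R m n) dls _ dlam lam_supp dmu
  mix_mu).
by move=> nu dnu mix_nu; rewrite lerN2 ls_max -mix_nu; exact: C11_up_ge.
Qed.

Lemma exists_uniform_dist (S : {set detch m n}) : S != finset.set0 ->
  exists2 lam : dist, is_dist lam & supp lam = S.
Proof.
move=> S_neq0; have cardS_neq0 : (#|S|%:R : R) != 0.
  by rewrite pnatr_eq0 -lt0n card_gt0.
exists [ffun D => (D \in S)%:R / #|S|%:R]; last first.
  apply/setP => D; rewrite inE ffunE.
  by case: (D \in S); rewrite ?mul0r ?eqxx // mul1r invr_eq0.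
split=> [D|]; first by rewrite ffunE divr_ge0.
under eq_bigr do rewrite ffunE.
rewrite -mulr_suml (bigID (mem S)) /= [X in _ + X]big1 => [|D /negbTE -> //].
rewrite addr0 (eq_bigr (fun=> 1)) => [|D /= -> //].
by rewrite sumr_const divff.
Qed.

Lemma I_minimized_subset (S S' : {set detch m n}) :
  I_minimized R S -> S' \subset S -> S' != finset.set0 -> I_minimized R S'.
Proof.
move=> S_min sub_S'S S'_neq0.
have [lam dlam supp_lam] := exists_uniform_dist S'_neq0.
exists lam; split=> //; split=> //; apply: I_minimized_supported S_min dlam _.
apply: supported_on_subset sub_S'S _.
by rewrite -supp_lam; exact: supported_on_supp.
Qed.

Lemma I_maximized_subset (S S' : {set detch m n}) :
  I_maximized R S -> S' \subset S -> S' != finset.set0 -> I_maximized R S'.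
Proof.
move=> S_max sub_S'S S'_neq0.
have [lam dlam supp_lam] := exists_uniform_dist S'_neq0.
exists lam; split=> //; split=> //; apply: I_maximized_supported S_max dlam _.
apply: supported_on_subset sub_S'S _.
by rewrite -supp_lam; exact: supported_on_supp.
Qed.

End Optimized.

Theorem proposition3 (R : realType) (m n : nat) (S : {set detch m n}) :
  (I_minimized R S ->
     (forall lam : {ffun detch m n -> R}, is_dist lam ->
        (forall D, D \notin S -> lam D = 0) -> C11 lam = C11_low (mix lam))
     /\ (forall S' : {set detch m n}, S' \subset S -> S' != finset.set0 ->
           I_minimized R S'))
  /\
  (I_maximized R S ->
     (forall lam : {ffun detch m n -> R}, is_dist lam ->
        (forall D, D \notin S -> lam D = 0) -> C11 lam = C11_up (mix lam))
     /\ (forall S' : {set detch m n}, S' \subset S -> S' != finset.set0 ->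
           I_maximized R S')).
Proof.
split=> [S_min | S_max]; split.
- by move=> lam; exact: I_minimized_supported.
- by move=> S'; exact: I_minimized_subset.
- by move=> lam; exact: I_maximized_supported.
- by move=> S'; exact: I_maximized_subset.
Qed.
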